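(* Let $(Z,Z_{ac},e)$ be an accretive archimedean matrix-order unit space and let $((V,V_{ac}),\psi)$ be a $*$-closure of $(Z,Z_{ac})$. Then $f=\psi(e)$ is an accretive archimedean matrix-order unit for $(V,V_{ac})$.
   Context: For a complex vector space $Z$, $M_n(Z)$ is the $n\times n$ matrices over $Z$; $e\otimes I_n$ is the diagonal matrix with all diagonal entries $e$. A cone is a set $C$ with $C+C\subseteq C$, $tC\subseteq C$ ($t\ge0$); a matrix cone is a sequence of cones $C_n\subseteq M_n(Z)$ with $X^*C_nX\subseteq C_k$ for all scalar $X\in M_{n,k}$; it is $\mathbb{C}$-proper if $C_1\cap-C_1\cap iC_1\cap-iC_1=\{0\}$, and then $(Z,Z_{ac})$ is an accretive matrix-ordered vector space, with $Z_{sa}^n=iZ_{ac}^n\cap-iZ_{ac}^n$. An element $e\in Z_{sa}^1$ is an accretive matrix-order unit if for each $n$ and $z\in M_n(Z)$ there is $t>0$ with $te\otimes I_n+z\in Z_{ac}^n$; it is archimedean if $te\otimes I_n+z\in Z_{ac}^n$ for all $t>0$ implies $z\in Z_{ac}^n$; $(Z,Z_{ac},e)$ is then an accretive archimedean matrix-order unit space. $(V,V_{ac})$ is self-adjoint if $V=\operatorname{span}_{\mathbb{C}}V_{sa}^1$; then $M_n(V)$ carries a unique conjugate-linear involution fixing $V_{sa}^n$, given by $[v_{kl}]^*=[v_{lk}^*]$. A linear map is real-completely positive if its entrywise amplifications preserve the accretive cones; a real-complete order embedding if it is injective and it and its inverse on the range are real-completely positive. A $*$-closure of $(Z,Z_{ac})$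 is a pair $((V,V_{ac}),\psi)$ with $(V,V_{ac})$ a self-adjoint accretive matrix-ordered vector space, $\psi:Z\to V$ a real-complete order embedding, and $V=\psi(Z)+\psi(Z)^*$. *)

(* Complex scalars: an arbitrary numClosedFieldType C. *)
From HB Require Import structures.
From mathcomp Require Import all_boot all_order all_algebra.
Set Implicit Arguments. Unset Strict Implicit. Unset Printing Implicit Defensive.
Import Order.TTheory GRing.Theory Num.Theory.
Local Open Scope ring_scope.

Section Defs.
Variable C : numClosedFieldType.

Definition mxscale (Z : lmodType C) m n (t : C) (x : 'M[Z]_(m, n)) : 'M[Z]_(m, n) :=
  map_mx (fun v => t *: v) x.

(* X^* z X for a scalar matrix X in M_{n,k}(C) and z in M_n(Z) *)
Definition mxconj_act (Z : lmodType C) n k (X : 'M[C]_(n, k)) (z : 'M[Z]_n)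
  : 'M[Z]_k :=
  \matrix_(i, j) \sum_(p < n) \sum_(q < n) (((X p i)^* * X q j) *: z p q).

Definition eI (Z : lmodType C) n (e : Z) : 'M[Z]_n :=
  \matrix_(i, j) (if i == j then e else 0).

(* a sequence of cones C_n in M_n(Z), n >= 1 (values at n = 0 are ignored) *)
Definition matrix_cone (Z : lmodType C) (K : forall n, 'M[Z]_n -> Prop) : Prop :=
  [/\ (forall n, (0 < n)%N -> forall x y, K n x -> K n y -> K n (x + y)),
      (forall n, (0 < n)%N -> forall (t : C) x, 0 <= t -> K n x -> K n (mxscale t x))
    & (forall n k, (0 < n)%N -> (0 < k)%N -> forall (X : 'M[C]_(n, k)) x,
          K n x -> K k (mxconj_act X x))].

(* C_1 ∩ -C_1 ∩ iC_1 ∩ -iC_1 = {0}, identifying Z with M_1(Z) *)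
Definition C_proper (Z : lmodType C) (K : forall n, 'M[Z]_n -> Prop) : Prop :=
  forall z : Z,
    K 1%N (const_mx z) -> K 1%N (const_mx (- z)) ->
    K 1%N (const_mx (- 'i *: z)) -> K 1%N (const_mx ('i *: z)) -> z = 0.

Definition accretive_movs (Z : lmodType C) (K : forall n, 'M[Z]_n -> Prop) : Prop :=
  matrix_cone K /\ C_proper K.

Definition is_sa (Z : lmodType C) (K : forall n, 'M[Z]_n -> Prop) n (z : 'M[Z]_n)
  : Prop :=
  K n (mxscale (- 'i) z) /\ K n (mxscale 'i z).

Definition accretive_order_unit (Z : lmodType C) (K : forall n, 'M[Z]_n -> Prop)
  (e : Z) : Prop :=
  is_sa K (const_mx e : 'M[Z]_1) /\
  (forall n, (0 < n)%N -> forall z : 'M[Z]_n,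
     exists t : C, 0 < t /\ K n (mxscale t (eI n e) + z)).

Definition archimedean_unit (Z : lmodType C) (K : forall n, 'M[Z]_n -> Prop)
  (e : Z) : Prop :=
  forall n, (0 < n)%N -> forall z : 'M[Z]_n,
    (forall t : C, 0 < t -> K n (mxscale t (eI n e) + z)) -> K n z.

Definition self_adjoint (V : lmodType C) (K : forall n, 'M[V]_n -> Prop) : Prop :=
  forall v : V, exists m (c : 'I_m -> C) (w : 'I_m -> V),
    (forall i, is_sa K (const_mx (w i) : 'M[V]_1)) /\ v = \sum_(i < m) c i *: w i.

(* star is a conjugate-linear involution on V fixing V_sa^1
   (by self-adjointness it is the unique such map) *)
Definition sa_involution (V : lmodType C) (K : forall n, 'M[V]_n -> Prop)
  (star : V -> V) : Prop :=
  [/\ (forall (a : C) (v w : V), star (a *: v + w) = a^* *: star v + star w),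
      (forall v, star (star v) = v)
    & (forall v, is_sa K (const_mx v : 'M[V]_1) -> star v = v)].

Definition real_completely_positive (Z V : lmodType C)
  (KZ : forall n, 'M[Z]_n -> Prop) (KV : forall n, 'M[V]_n -> Prop)
  (psi : {linear Z -> V}) : Prop :=
  forall n, (0 < n)%N -> forall x : 'M[Z]_n, KZ n x -> KV n (map_mx psi x).

Definition real_complete_order_embedding (Z V : lmodType C)
  (KZ : forall n, 'M[Z]_n -> Prop) (KV : forall n, 'M[V]_n -> Prop)
  (psi : {linear Z -> V}) : Prop :=
  [/\ injective psi,
      real_completely_positive KZ KV psi
    & (forall n, (0 < n)%N -> forall x : 'M[Z]_n, KV n (map_mx psi x) -> KZ n x)].

Definition star_closure (Z V : lmodType C)
  (KZ : forall n, 'M[Z]_n -> Prop) (KV : forall n, 'M[V]_n -> Prop)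
  (psi : {linear Z -> V}) (star : V -> V) : Prop :=
  [/\ accretive_movs KV, self_adjoint KV, sa_involution KV star,
      real_complete_order_embedding KZ KV psi
    & (forall v : V, exists z1 z2 : Z, v = psi z1 + star (psi z2))].

End Defs.

From HB Require Import structures.
From mathcomp Require Import all_boot all_order all_algebra.
From mathcomp Require Import ring.
Set Implicit Arguments. Unset Strict Implicit. Unset Printing Implicit Defensive.
Import Order.TTheory GRing.Theory Num.Theory.
Local Open Scope ring_scope.

(* Since V = psi(Z) + psi(Z)^*, every v in M_n(V) splits as psi_n(w) + x - x^*
   with w in M_n(Z) and x in M_n(V).  Skew-adjoint matrices x - x^* lie in V_ac^n,
   and so do their negatives: writing x as a sum of E_kl (x) d and d as a
   combination of self-adjoint elements w, one reduces to (c E_kl - c^* E_lk) (x) w,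
   which is obtained by polarization from the accretive elements i w and -i w.
   Hence the order-unit and archimedean properties of e transfer to psi(e)
   through the real-complete order embedding psi. *)

Section Cones.
Variables (C : numClosedFieldType) (V : lmodType C) (K : forall n, 'M[V]_n -> Prop).
Arguments K : clear implicits.
Hypothesis coneK : matrix_cone K.

Lemma mxconj_act0 n k (x : 'M[V]_n) : mxconj_act (0 : 'M[C]_(n, k)) x = 0.
Proof.
apply/matrixP => p q; rewrite !mxE big1 // => i _; rewrite big1 // => j _.
by rewrite !mxE mulr0 scale0r.
Qed.

Lemma matrix_cone0 m n (x : 'M[V]_m) : (0 < m)%N -> (0 < n)%N -> K m x -> K n 0.
Proof.
case: coneK => _ _ conjK m_gt0 n_gt0 Kx.
by rewrite -(mxconj_act0 n x); exact: conjK.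
Qed.

Lemma matrix_cone_sum n I (r : seq I) (P : pred I) (F : I -> 'M[V]_n) :
  (0 < n)%N -> K n 0 -> (forall i, P i -> K n (F i)) ->
  K n (\sum_(i <- r | P i) F i).
Proof.
case: coneK => addK _ _ n_gt0 K0 KF.
by apply: (big_ind (K n)) => // x y; apply: addK.
Qed.

End Cones.

Section Tensor.
Variables (C : numClosedFieldType) (V : lmodType C).

Definition tensor_mx m n (A : 'M[C]_(m, n)) (w : V) : 'M[V]_(m, n) :=
  map_mx (fun a => a *: w) A.

Lemma tensor_mxDl m n (A B : 'M[C]_(m, n)) w :
  tensor_mx (A + B) w = tensor_mx A w + tensor_mx B w.
Proof. by apply/matrixP => p q; rewrite !mxE scalerDl. Qed.

Lemma tensor_mxZr m n (A : 'M[C]_(m, n)) a w :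
  tensor_mx A (a *: w) = tensor_mx (a *: A) w.
Proof. by apply/matrixP => p q; rewrite !mxE scalerA mulrC. Qed.

Lemma tensor_mx_sumr m n (A : 'M[C]_(m, n)) I (r : seq I) (F : I -> V) :
  tensor_mx A (\sum_(i <- r) F i) = \sum_(i <- r) tensor_mx A (F i).
Proof.
apply/matrixP => p q; rewrite !mxE summxE scaler_sumr.
by apply: eq_bigr => i _; rewrite mxE.
Qed.

Lemma mx_sum_tensor_delta m n (x : 'M[V]_(m, n)) :
  x = \sum_i \sum_j tensor_mx (delta_mx i j) (x i j).
Proof.
apply/matrixP => p q; rewrite summxE (bigD1 p) //= summxE (bigD1 q) //=.
rewrite !mxE !eqxx scale1r big1 => [|j jq]; last first.
  by rewrite !mxE eqxx eq_sym (negbTE jq) scale0r.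
rewrite big1 ?addr0 // => i ip; rewrite summxE big1 // => j _.
by rewrite !mxE eq_sym (negbTE ip) scale0r.
Qed.

Lemma mxconj_act_const k (X : 'M[C]_(1, k)) (w : V) :
  mxconj_act X (const_mx w) = tensor_mx ((map_mx Num.conj X)^T *m X) w.
Proof. by apply/matrixP => p q; rewrite !mxE !big_ord1 !mxE. Qed.

Lemma mxscale_const m n t (w : V) :
  mxscale t (const_mx w : 'M_(m, n)) = const_mx (t *: w).
Proof. by apply/matrixP => p q; rewrite !mxE. Qed.

End Tensor.

Section SkewPart.
Variables (C : numClosedFieldType) (V : lmodType C) (K : forall n, 'M[V]_n -> Prop).
Variable star : V -> V.
Arguments K : clear implicits.
Hypotheses (coneK : matrix_cone K) (spanK : self_adjoint K).
Hypothesis starK : sa_involution K star.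

Lemma star_semilinear a v w : star (a *: v + w) = a^* *: star v + star w.
Proof. by case: starK. Qed.

Lemma star0 : star 0 = 0.
Proof.
have := star_semilinear 1 0 0; rewrite scaler0 add0r rmorph1 scale1r => star00.
by apply: (addrI (star 0)); rewrite -star00 addr0.
Qed.

Lemma starD v w : star (v + w) = star v + star w.
Proof. by rewrite -[v]scale1r star_semilinear rmorph1 !scale1r. Qed.

Lemma starZ a v : star (a *: v) = a^* *: star v.
Proof. by rewrite -[a *: v]addr0 star_semilinear star0 addr0. Qed.

Lemma starN v : star (- v) = - star v.
Proof. by rewrite -scaleN1r starZ rmorphN1 scaleN1r. Qed.

Lemma sa_tensor_skew_delta_in_cone n (k l : 'I_n) (c : C) (w : V) : (0 < n)%N ->
  is_sa K (const_mx w : 'M_1) ->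
  K n (tensor_mx (c *: delta_mx k l - c^* *: delta_mx l k) w).
Proof.
case: coneK => addK _ conjK n_gt0 [Kmw Kw].
rewrite !mxscale_const in Kmw Kw.
(* Polarization: i (X + Y)^*(X + Y) - i X^*X - i Y^*Y = c E_kl - c^* E_lk. *)
pose X : 'M[C]_(1, n) := delta_mx 0 k.
pose Y : 'M[C]_(1, n) := (- 'i * c) *: delta_mx 0 l.
have conj1K := conjK 1%N n isT n_gt0.
have := addK _ n_gt0 _ _ (addK _ n_gt0 _ _ (conj1K (X + Y) _ Kw)
  (conj1K X _ Kmw)) (conj1K Y _ Kmw).
rewrite !mxconj_act_const !tensor_mxZr -!tensor_mxDl; congr (K n (tensor_mx _ w)).
apply/matrixP => p q; rewrite !mxE !big_ord1 !mxE /= -!mulnb !natrM.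
rewrite !rmorphD !rmorphM /= !rmorphN /= conjCi !conjC_nat.
have ii : 'i * 'i = -1 :> C by rewrite -expr2 sqrCi.
set a := (p == k)%:R; set a' := (q == k)%:R.
set b := (p == l)%:R; set b' := (q == l)%:R.
transitivity (c * (a * b') - c^* * (b * a')
              + ('i * 'i + 1) * (c^* * b * a' - c * a * b')); first by ring.
by rewrite ii addNr mul0r addr0.
Qed.

Definition mx_adj n (x : 'M[V]_n) : 'M[V]_n := \matrix_(i, j) star (x j i).

Definition skew_mx n (x : 'M[V]_n) : 'M[V]_n := x - mx_adj x.

Lemma skew_mx0 n : skew_mx (0 : 'M_n) = 0.
Proof. by apply/matrixP => p q; rewrite !mxE star0 subr0. Qed.

Lemma skew_mxD n (x y : 'M_n) : skew_mx (x + y) = skew_mx x + skew_mx y.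
Proof. by apply/matrixP => p q; rewrite !mxE starD opprD addrACA. Qed.

Lemma skew_mxN n (x : 'M_n) : skew_mx (- x) = - skew_mx x.
Proof. by apply/matrixP => p q; rewrite !mxE starN opprD. Qed.

Lemma skew_mx_sum n I (r : seq I) (F : I -> 'M_n) :
  skew_mx (\sum_(i <- r) F i) = \sum_(i <- r) skew_mx (F i).
Proof. exact: (big_morph _ (@skew_mxD n) (skew_mx0 n)). Qed.

Lemma skew_mx_tensor_sa n (k l : 'I_n) (c : C) (w : V) :
  is_sa K (const_mx w : 'M_1) ->
  skew_mx (tensor_mx (delta_mx k l) (c *: w)) =
  tensor_mx (c *: delta_mx k l - c^* *: delta_mx l k) w.
Proof.
move=> saw; have [_ _ fixK] := starK; have star_w := fixK w saw.
apply/matrixP => p q; rewrite !mxE starZ starZ star_w !scalerA -scalerBl.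
by rewrite conjC_nat [(q == k) && _]andbC [_ * c]mulrC [_ * c^*]mulrC.
Qed.

Lemma skew_mx_tensor_in_cone n (k l : 'I_n) (d : V) : (0 < n)%N -> K n 0 ->
  K n (skew_mx (tensor_mx (delta_mx k l) d)).
Proof.
move=> n_gt0 K0; have [m [c [w [saw ->]]]] := spanK d.
rewrite tensor_mx_sumr skew_mx_sum; apply: matrix_cone_sum => // i _.
by rewrite skew_mx_tensor_sa //; apply: sa_tensor_skew_delta_in_cone.
Qed.

Lemma skew_mx_in_cone n (x : 'M[V]_n) : (0 < n)%N -> K n 0 -> K n (skew_mx x).
Proof.
move=> n_gt0 K0; rewrite [x]mx_sum_tensor_delta !skew_mx_sum.
apply: matrix_cone_sum => // k _; rewrite skew_mx_sum.
by apply: matrix_cone_sum => // l _; apply: skew_mx_tensor_in_cone.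
Qed.

End SkewPart.

Section StarClosure.
Variables (C : numClosedFieldType) (Z V : lmodType C) (psi : {linear Z -> V}).

Lemma map_mxscale m n t (x : 'M[Z]_(m, n)) :
  map_mx psi (mxscale t x) = mxscale t (map_mx psi x).
Proof. by apply/matrixP => p q; rewrite !mxE linearZ. Qed.

Lemma map_eI n (e : Z) : map_mx psi (eI n e) = eI n (psi e).
Proof. by apply/matrixP => p q; rewrite !mxE; case: ifP; rewrite ?linear0. Qed.

Lemma real_completely_positive_sa (KZ : forall n, 'M[Z]_n -> Prop)
    (KV : forall n, 'M[V]_n -> Prop) (e : Z) :
  real_completely_positive KZ KV psi -> is_sa KZ (const_mx e : 'M_1) ->
  is_sa KV (const_mx (psi e) : 'M_1).
Proof.
move=> psiK [Kme Ke].
by split; rewrite -map_const_mx -map_mxscale; apply: psiK.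
Qed.

Lemma map_mx_skew_decomposition (K : forall n, 'M[V]_n -> Prop) (star : V -> V) :
  sa_involution K star -> (forall v, exists z1 z2, v = psi z1 + star (psi z2)) ->
  forall n (v : 'M[V]_n), exists (w : 'M[Z]_n) (x : 'M[V]_n),
    v = map_mx psi w + skew_mx star x.
Proof.
move=> starK decV n v.
have [f fE] : exists f : 'I_n * 'I_n -> Z * Z,
    forall ij, v ij.1 ij.2 = psi (f ij).1 + star (psi (f ij).2).
  apply: (@fin_all_exists _ (fun=> (Z * Z)%type)
    (fun ij z => v ij.1 ij.2 = psi z.1 + star (psi z.2))) => -[i j].
  by have [z1 [z2 vE]] := decV (v i j); exists (z1, z2).
exists (\matrix_(i, j) ((f (i, j)).1 + (f (j, i)).2)).
exists (- \matrix_(i, j) psi (f (j, i)).2).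
apply/matrixP => i j; rewrite !mxE (fE (i, j)) (starN starK) opprK linearD /=.
by rewrite -addrA addNKr.
Qed.

End StarClosure.

Theorem proposition3p3 (C : numClosedFieldType) (Z V : lmodType C)
  (KZ : forall n, 'M[Z]_n -> Prop) (e : Z)
  (KV : forall n, 'M[V]_n -> Prop) (psi : {linear Z -> V}) (star : V -> V) :
  accretive_movs KZ -> accretive_order_unit KZ e -> archimedean_unit KZ e ->
  star_closure KZ KV psi star ->
  accretive_order_unit KV (psi e) /\ archimedean_unit KV (psi e).
Proof.
move=> _ [sa_e unitZ] archZ [[coneV _] spanV starV [_ psiK psiK_inv] decV].
have sa_f := real_completely_positive_sa psiK sa_e.
have KV0 n : (0 < n)%N -> KV n 0.
  by move=> n_gt0; apply: (matrix_cone0 coneV (ltn0Sn 0) n_gt0 sa_f.2).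
have skewK n x : (0 < n)%N -> KV n (skew_mx star x).
  by move=> n_gt0; apply: skew_mx_in_cone => //; apply: KV0.
have [addV _ _] := coneV.
split; first split => // n n_gt0 v.
- have [w [x ->]] := map_mx_skew_decomposition starV decV v.
  have [t [t_gt0 Kt]] := unitZ n n_gt0 w.
  exists t; split => //; rewrite addrA -map_eI -map_mxscale -map_mxD.
  by apply: addV => //; [apply: psiK | apply: skewK].
- move=> n n_gt0 v Kv; have [w [x vE]] := map_mx_skew_decomposition starV decV v.
  have Kw : KZ n w.
    apply: archZ => // t t_gt0; apply: psiK_inv => //.
    rewrite map_mxD map_mxscale map_eI.
    have -> : map_mx psi w = v + skew_mx star (- x).
      by rewrite vE (skew_mxN starV) addrK.
    by rewrite addrA; apply: addV => //; [apply: Kv | apply: skewK].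
  by rewrite vE; apply: addV => //; [apply: psiK | apply: skewK].
Qed.
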